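(* Let $\mathcal{D}$ denote either the unit circle $S^1$ or the unit interval $[0,1]$, and let $c:\mathcal{D}\to\mathbb{R}^2$ be a smooth immersed plane curve with speed $\omega=|\dot c|>0$ and signed curvature $\kappa$. Let $\tilde c:=q(c)=\dot c/\sqrt{|\dot c|}$ be its square root velocity transform, and denote the speed of $\tilde c$ by $\tilde\omega=|\dot{\tilde c}|$. Then \[ \tilde{\omega}=\sqrt{\frac{\dot{\omega}^2}{4\omega}+\omega^3\kappa^2}. \] Moreover, $\tilde c$ is an immersion if and only if $\kappa$ and $\dot\omega$ have no common zeros. In this case, \[ \tilde{\kappa}\,\tilde{\omega}=\kappa\,\omega+\dot{\varphi}, \] where $\tilde\kappa$ denotes the signed curvature of $\tilde c$ and \[ \varphi:=\arctan\!\left(\frac{2\omega^2\kappa}{\dot{\omega}}\right). \]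
   Context: Dots denote derivatives with respect to the curve parameter $t\in\mathcal{D}$. For the plane curve $c$, $T=\dot c/\omega$ is the unit tangent, $N$ is the unit normal (obtained by rotating $T$ by $+\pi/2$), and the signed curvature $\kappa$ is defined by the Frenet equations $\dot T=\omega\kappa N$, $\dot N=-\omega\kappa T$; the signed curvature of $\tilde c$ is defined analogously. The square root velocity transform $\tilde c=\dot c/\sqrt{|\dot c|}$ is again a smooth curve in $\mathbb{R}^2$, but need not be an immersion. *)

From Stdlib Require Import Reals.
From Coquelicot Require Import Coquelicot.
Open Scope R_scope.

Definition cx (c : R -> R * R) (t : R) : R := fst (c t).
Definition cy (c : R -> R * R) (t : R) : R := snd (c t).

Definition smooth_fun (f : R -> R) : Prop := forall (n : nat) (x : R), ex_derive_n f n x.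
Definition smooth_curve (c : R -> R * R) : Prop := smooth_fun (cx c) /\ smooth_fun (cy c).

(* The parameter domain: the unit circle S^1 (realised as 1-periodic curves on R)
   or the unit interval [0,1]. *)
Inductive param_domain := Circle | Interval.

Definition in_dom (D : param_domain) (t : R) : Prop :=
  match D with Circle => True | Interval => 0 <= t <= 1 end.

(* A smooth curve c : D -> R^2 (for the interval: a smooth curve on R, viewed on [0,1]). *)
Definition curve_on (D : param_domain) (c : R -> R * R) : Prop :=
  smooth_curve c /\ (D = Circle -> forall t, c (t + 1) = c t).

Definition speed (c : R -> R * R) (t : R) : R :=
  sqrt (Derive (cx c) t ^ 2 + Derive (cy c) t ^ 2).

Definition immersion (D : param_domain) (c : R -> R * R) : Prop :=
  forall t, in_dom D t -> 0 < speed c t.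

Definition Tx (c : R -> R * R) (t : R) : R := Derive (cx c) t / speed c t.
Definition Ty (c : R -> R * R) (t : R) : R := Derive (cy c) t / speed c t.
Definition Nx (c : R -> R * R) (t : R) : R := - Ty c t.
Definition Ny (c : R -> R * R) (t : R) : R := Tx c t.

Definition signed_curvature (c : R -> R * R) (kappa : R -> R) : Prop :=
  forall t, 0 < speed c t ->
    Derive (Tx c) t = speed c t * kappa t * Nx c t /\
    Derive (Ty c) t = speed c t * kappa t * Ny c t /\
    Derive (Nx c) t = - (speed c t * kappa t * Tx c t) /\
    Derive (Ny c) t = - (speed c t * kappa t * Ty c t).

Definition srv (c : R -> R * R) (t : R) : R * R :=
  (Derive (cx c) t / sqrt (speed c t), Derive (cy c) t / sqrt (speed c t)).

(* Where omega' = 0 (so kappa <> 0 under the hypothesis) the quotient is undefined;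
   there phi is understood as its continuous branch, locally
   +-pi/2 - arctan (omega' / (2 omega^2 kappa)), whose derivative is used. *)
Definition phi_num (c : R -> R * R) (kappa : R -> R) (s : R) : R :=
  2 * speed c s ^ 2 * kappa s.
Definition phi_den (c : R -> R * R) (s : R) : R := Derive (speed c) s.

Definition phi (c : R -> R * R) (kappa : R -> R) (s : R) : R :=
  atan (phi_num c kappa s / phi_den c s).

Definition phi_dot (c : R -> R * R) (kappa : R -> R) (t : R) : R :=
  match Req_EM_T (phi_den c t) 0 with
  | right _ => Derive (phi c kappa) t
  | left _ => - Derive (fun s => atan (phi_den c s / phi_num c kappa s)) t
  end.

From Stdlib Require Import Reals Lra.
From Coquelicot Require Import Coquelicot.
Open Scope R_scope.

(* With ω = |ċ| we have ċ = ω T, so q(c) = √ω T and the Frenet equations give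
   q(c)' = (ω̇ T + 2ω²κ N) / (2√ω).  As (T, N) is orthonormal, this yields the speed
   formula, which vanishes exactly where κ = ω̇ = 0.
   The product κω is the angular velocity (u₁u₂' - u₂u₁') / |u|² of the velocity u, and
   angular velocities add under complex multiplication.  Reading q(c)' as the product of
   the complex numbers (ω̇ + 2ω²κ i) / (2√ω) and T, the positive factor 1/(2√ω)
   contributes nothing, ω̇ + 2ω²κ i contributes φ̇ and T contributes κω. *)

Lemma sqrt_pos_iff x : 0 < sqrt x <-> 0 < x.
Proof.
  split; [|exact (sqrt_lt_R0 x)].
  intros Hs. destruct (Rle_or_lt x 0) as [Hx|Hx]; [|exact Hx].
  rewrite (sqrt_neg_0 x Hx) in Hs. lra.
Qed.

Lemma sum_sq_pos a b : 0 < a ^ 2 + b ^ 2 <-> ~ (a = 0 /\ b = 0).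
Proof.
  split.
  - intros H [-> ->]. lra.
  - intros H. destruct (Req_dec a 0) as [->|Ha].
    + assert (Hb : b <> 0) by tauto. assert (0 < b ^ 2) by (apply pow2_gt_0; exact Hb). lra.
    + assert (0 < a ^ 2) by (apply pow2_gt_0; exact Ha). nra.
Qed.

Definition angular_velocity (u1 u2 : R -> R) (t : R) : R :=
  (u1 t * Derive u2 t - u2 t * Derive u1 t) / (u1 t ^ 2 + u2 t ^ 2).

Lemma angular_velocity_ext_loc (u1 u2 v1 v2 : R -> R) t :
  locally t (fun s => u1 s = v1 s /\ u2 s = v2 s) ->
  angular_velocity u1 u2 t = angular_velocity v1 v2 t.
Proof.
  intros Huv. unfold angular_velocity.
  destruct (locally_singleton _ _ Huv) as [-> ->].
  rewrite (Derive_ext_loc u1 v1), (Derive_ext_loc u2 v2); [reflexivity| |];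
    apply (filter_imp _ _ (fun s Hs => proj2 Hs) Huv) ||
    apply (filter_imp _ _ (fun s Hs => proj1 Hs) Huv).
Qed.

Lemma angular_velocity_swap (u1 u2 : R -> R) t :
  angular_velocity u2 u1 t = - angular_velocity u1 u2 t.
Proof. unfold angular_velocity. rewrite Rplus_comm. unfold Rdiv. ring. Qed.

Lemma is_derive_atan_ratio (u1 u2 : R -> R) t :
  ex_derive u1 t -> ex_derive u2 t -> u1 t <> 0 ->
  is_derive (fun s => atan (u2 s / u1 s)) t (angular_velocity u1 u2 t).
Proof.
  intros Hu1 Hu2 Hnz. unfold angular_velocity. auto_derive.
  - tauto.
  - assert (0 < u1 t ^ 2) by (apply pow2_gt_0; exact Hnz).
    (* auto_derive eta-expands the functions; field would treat these as new atoms. *)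
    change (Derive (fun x : R => u2 x) t) with (Derive u2 t).
    change (Derive (fun x : R => u1 x) t) with (Derive u1 t).
    field. split; [nra | exact Hnz].
Qed.

Lemma angular_velocity_mul (p1 p2 q1 q2 : R -> R) t :
  ex_derive p1 t -> ex_derive p2 t -> ex_derive q1 t -> ex_derive q2 t ->
  0 < p1 t ^ 2 + p2 t ^ 2 -> 0 < q1 t ^ 2 + q2 t ^ 2 ->
  angular_velocity (fun s => p1 s * q1 s - p2 s * q2 s)
                   (fun s => p1 s * q2 s + p2 s * q1 s) t
  = angular_velocity p1 p2 t + angular_velocity q1 q2 t.
Proof.
  intros Hp1 Hp2 Hq1 Hq2 Hp Hq. unfold angular_velocity.
  rewrite Derive_minus, Derive_plus, !Derive_mult by (auto_derive; tauto).
  match goal with |- _ / ?d = _ => replace d with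
    ((p1 t ^ 2 + p2 t ^ 2) * (q1 t ^ 2 + q2 t ^ 2)) by ring end.
  field. lra.
Qed.

Lemma angular_velocity_div (a b l : R -> R) t :
  ex_derive a t -> ex_derive b t -> ex_derive l t -> l t <> 0 ->
  0 < a t ^ 2 + b t ^ 2 ->
  angular_velocity (fun s => a s / l s) (fun s => b s / l s) t = angular_velocity a b t.
Proof.
  intros Ha Hb Hl Hl0 Hab. unfold angular_velocity.
  rewrite !Derive_div by assumption. field. split; [lra|exact Hl0].
Qed.

Lemma angular_velocity_normalize (u1 u2 : R -> R) t :
  ex_derive u1 t -> ex_derive u2 t -> 0 < u1 t ^ 2 + u2 t ^ 2 ->
  angular_velocity (fun s => u1 s / sqrt (u1 s ^ 2 + u2 s ^ 2))
                   (fun s => u2 s / sqrt (u1 s ^ 2 + u2 s ^ 2)) t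
  = angular_velocity u1 u2 t.
Proof.
  intros Hu1 Hu2 Hu. apply angular_velocity_div; try assumption.
  - auto_derive. tauto.
  - apply Rgt_not_eq, sqrt_lt_R0, Hu.
Qed.

Lemma phi_dot_angular_velocity c kappa t :
  ex_derive (phi_den c) t -> ex_derive (phi_num c kappa) t ->
  ~ (phi_den c t = 0 /\ phi_num c kappa t = 0) ->
  phi_dot c kappa t = angular_velocity (phi_den c) (phi_num c kappa) t.
Proof.
  intros Hden Hnum Hnz. unfold phi_dot.
  destruct (Req_EM_T (phi_den c t) 0) as [Hd|Hd].
  - rewrite <- (Ropp_involutive (angular_velocity _ _ t)), <- angular_velocity_swap.
    f_equal. apply is_derive_unique, is_derive_atan_ratio; try assumption.
    intros Hn. exact (Hnz (conj Hd Hn)).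
  - apply is_derive_unique, is_derive_atan_ratio; assumption.
Qed.

Lemma unit_tangent_norm c t : 0 < speed c t -> Tx c t ^ 2 + Ty c t ^ 2 = 1.
Proof.
  intros Hc. unfold Tx, Ty.
  assert (Hsq : speed c t ^ 2 = Derive (cx c) t ^ 2 + Derive (cy c) t ^ 2).
  { unfold speed. rewrite <- Rsqr_pow2. apply Rsqr_sqrt. nra. }
  field_simplify; [|lra]. rewrite <- Hsq. field. lra.
Qed.

Lemma curvature_angular_velocity c kappa t :
  signed_curvature c kappa -> 0 < speed c t ->
  angular_velocity (Tx c) (Ty c) t = speed c t * kappa t.
Proof.
  intros Hk Hc. destruct (Hk t Hc) as [HTx [HTy _]].
  pose proof (unit_tangent_norm c t Hc) as HT.
  unfold angular_velocity. rewrite HTx, HTy, HT. unfold Nx, Ny.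
  transitivity (speed c t * kappa t * (Tx c t ^ 2 + Ty c t ^ 2)); [field | rewrite HT; ring].
Qed.

Lemma velocity_sq_pos c y :
  0 < speed c y -> 0 < Derive (cx c) y ^ 2 + Derive (cy c) y ^ 2.
Proof. apply sqrt_pos_iff. Qed.

Lemma tangent_angular_velocity c t :
  ex_derive (Derive (cx c)) t -> ex_derive (Derive (cy c)) t -> 0 < speed c t ->
  angular_velocity (Tx c) (Ty c) t
  = angular_velocity (Derive (cx c)) (Derive (cy c)) t.
Proof.
  intros Hx Hy Hc. exact (angular_velocity_normalize _ _ t Hx Hy (velocity_sq_pos c t Hc)).
Qed.

Definition srv_tangential (c : R -> R * R) (s : R) : R :=
  phi_den c s / (2 * sqrt (speed c s)).
Definition srv_normal (c : R -> R * R) (kappa : R -> R) (s : R) : R :=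
  phi_num c kappa s / (2 * sqrt (speed c s)).

Lemma srv_sqrt_speed_tangent c y : 0 < speed c y ->
  cx (srv c) y = sqrt (speed c y) * Tx c y /\ cy (srv c) y = sqrt (speed c y) * Ty c y.
Proof.
  intros Hc. pose proof (sqrt_lt_R0 _ Hc) as Hr.
  pose proof (sqrt_sqrt _ (Rlt_le _ _ Hc)) as Hrr.
  unfold cx, cy, srv, Tx, Ty; simpl. set (r := sqrt (speed c y)) in *.
  rewrite <- Hrr. split; field; lra.
Qed.

Lemma srv_coef_norm c kappa y : 0 < speed c y ->
  srv_tangential c y ^ 2 + srv_normal c kappa y ^ 2
  = Derive (speed c) y ^ 2 / (4 * speed c y) + speed c y ^ 3 * kappa y ^ 2.
Proof.
  intros Hy. pose proof (sqrt_lt_R0 _ Hy) as Hr.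
  pose proof (sqrt_sqrt _ (Rlt_le _ _ Hy)) as Hrr.
  unfold srv_tangential, srv_normal, phi_den, phi_num.
  set (r := sqrt (speed c y)) in *. rewrite <- Hrr. field. lra.
Qed.

Lemma Rdiv_eq_0 a m : m <> 0 -> a / m = 0 -> a = 0.
Proof. intros Hm H. replace a with (a / m * m) by (field; exact Hm). rewrite H. ring. Qed.

Lemma srv_coef_pos_iff c kappa y : 0 < speed c y ->
  0 < srv_tangential c y ^ 2 + srv_normal c kappa y ^ 2
  <-> ~ (kappa y = 0 /\ Derive (speed c) y = 0).
Proof.
  intros Hy. assert (Hm : 2 * sqrt (speed c y) <> 0) by (pose proof (sqrt_lt_R0 _ Hy); lra).
  rewrite sum_sq_pos. unfold srv_tangential, srv_normal, phi_den, phi_num.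
  split; intros Hnz [H1 H2]; apply Hnz; split.
  - rewrite H2. apply Rdiv_0_l.
  - rewrite H1, Rmult_0_r. apply Rdiv_0_l.
  - destruct (Rmult_integral _ _ (Rdiv_eq_0 _ _ Hm H2)) as [H|H]; [nra | exact H].
  - exact (Rdiv_eq_0 _ _ Hm H1).
Qed.

Section SmoothCurve.

Variable c : R -> R * R.
Hypothesis Hc : smooth_curve c.

Lemma ex_derive_cx' y : ex_derive (Derive (cx c)) y.
Proof. exact (proj1 Hc 2%nat y). Qed.
Lemma ex_derive_cy' y : ex_derive (Derive (cy c)) y.
Proof. exact (proj2 Hc 2%nat y). Qed.
Lemma ex_derive_cx'' y : ex_derive (Derive (Derive (cx c))) y.
Proof. exact (proj1 Hc 3%nat y). Qed.
Lemma ex_derive_cy'' y : ex_derive (Derive (Derive (cy c))) y.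
Proof. exact (proj2 Hc 3%nat y). Qed.

#[local] Hint Resolve ex_derive_cx' ex_derive_cy' ex_derive_cx'' ex_derive_cy'' : core.

Lemma is_derive_speed y : 0 < speed c y ->
  is_derive (speed c) y
    ((Derive (cx c) y * Derive (Derive (cx c)) y
      + Derive (cy c) y * Derive (Derive (cy c)) y) / speed c y).
Proof.
  intros Hy. pose proof (velocity_sq_pos c y Hy) as Hv.
  unfold speed in *. auto_derive.
  - repeat split; auto.
  - change (fun x => Derive (cx c) x) with (Derive (cx c)).
    change (fun x => Derive (cy c) x) with (Derive (cy c)).
    replace (Derive (cx c) y * (Derive (cx c) y * 1) + Derive (cy c) y * (Derive (cy c) y * 1))
      with (Derive (cx c) y ^ 2 + Derive (cy c) y ^ 2) by ring.
    field. apply Rgt_not_eq, Hy.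
Qed.

Lemma ex_derive_speed y : 0 < speed c y -> ex_derive (speed c) y.
Proof. intros Hy. eexists. exact (is_derive_speed y Hy). Qed.

Lemma locally_regular (P : R -> Prop) t : 0 < speed c t ->
  (forall s, 0 < speed c s -> P s) -> locally t P.
Proof.
  intros Ht HP. apply (filter_imp _ _ HP).
  exact (ex_derive_continuous _ _ (ex_derive_speed t Ht) _ (open_gt 0 _ Ht)).
Qed.

Lemma ex_derive_Derive_speed t : 0 < speed c t -> ex_derive (Derive (speed c)) t.
Proof.
  intros Ht.
  apply (ex_derive_ext_loc (fun s => (Derive (cx c) s * Derive (Derive (cx c)) s
      + Derive (cy c) s * Derive (Derive (cy c)) s) / speed c s)).
  - apply (locally_regular _ t Ht). intros s Hs.
    symmetry. exact (is_derive_unique _ _ _ (is_derive_speed s Hs)).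
  - auto_derive. repeat split; auto using ex_derive_speed. lra.
Qed.

Lemma ex_derive_tangent y : 0 < speed c y -> ex_derive (Tx c) y /\ ex_derive (Ty c) y.
Proof.
  intros Hy. unfold Tx, Ty.
  split; auto_derive; repeat split; auto using ex_derive_speed; lra.
Qed.

Lemma Derive_sqrt_speed_mul (f : R -> R) y : 0 < speed c y -> ex_derive f y ->
  Derive (fun s => sqrt (speed c s) * f s) y
  = Derive (speed c) y / (2 * sqrt (speed c y)) * f y + sqrt (speed c y) * Derive f y.
Proof.
  intros Hy Hf. pose proof (Derive_correct _ _ (ex_derive_speed y Hy)) as Hspeed.
  rewrite Derive_mult; [|eexists; exact (is_derive_sqrt _ _ _ Hspeed Hy)|exact Hf].
  do 2 f_equal. apply is_derive_unique, is_derive_sqrt; assumption.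
Qed.

Section Curvature.

Variable kappa : R -> R.
Hypothesis Hk : signed_curvature c kappa.

Lemma curvature_eq y : 0 < speed c y ->
  kappa y = angular_velocity (Derive (cx c)) (Derive (cy c)) y / speed c y.
Proof.
  intros Hy. rewrite <- tangent_angular_velocity by auto.
  rewrite (curvature_angular_velocity c kappa y Hk Hy). field. lra.
Qed.

Lemma ex_derive_curvature t : 0 < speed c t -> ex_derive kappa t.
Proof.
  intros Ht.
  apply (ex_derive_ext_loc
    (fun s => angular_velocity (Derive (cx c)) (Derive (cy c)) s / speed c s)).
  - apply (locally_regular _ t Ht). intros s Hs. symmetry. exact (curvature_eq s Hs).
  - pose proof (velocity_sq_pos c t Ht). unfold angular_velocity.
    auto_derive. repeat split; auto using ex_derive_speed; lra.
Qed.

Lemma ex_derive_phi t : 0 < speed c t ->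
  ex_derive (phi_den c) t /\ ex_derive (phi_num c kappa) t.
Proof.
  intros Ht. split; [exact (ex_derive_Derive_speed t Ht)|].
  unfold phi_num. auto_derive. repeat split; auto using ex_derive_speed, ex_derive_curvature.
Qed.

Lemma srv_velocity y : 0 < speed c y ->
  Derive (cx (srv c)) y = srv_tangential c y * Tx c y - srv_normal c kappa y * Ty c y /\
  Derive (cy (srv c)) y = srv_tangential c y * Ty c y + srv_normal c kappa y * Tx c y.
Proof.
  intros Hy. destruct (ex_derive_tangent y Hy) as [HTx HTy].
  destruct (Hk y Hy) as [HdTx [HdTy _]].
  pose proof (sqrt_lt_R0 _ Hy) as Hr.
  pose proof (sqrt_sqrt _ (Rlt_le _ _ Hy)) as Hrr.
  assert (Hloc := locally_regular _ y Hy (srv_sqrt_speed_tangent c)).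
  rewrite (Derive_ext_loc _ (fun s => sqrt (speed c s) * Tx c s)),
          (Derive_ext_loc (cy (srv c)) (fun s => sqrt (speed c s) * Ty c s)),
          !Derive_sqrt_speed_mul, HdTx, HdTy by
    (assumption || exact (filter_imp _ _ (fun s Hs => proj1 Hs) Hloc)
                || exact (filter_imp _ _ (fun s Hs => proj2 Hs) Hloc)).
  unfold srv_tangential, srv_normal, phi_den, phi_num, Nx, Ny.
  set (r := sqrt (speed c y)) in *. rewrite <- Hrr. split; field; lra.
Qed.

Lemma speed_srv y : 0 < speed c y ->
  speed (srv c) y = sqrt (srv_tangential c y ^ 2 + srv_normal c kappa y ^ 2).
Proof.
  intros Hy. unfold speed at 1. destruct (srv_velocity y Hy) as [-> ->]. f_equal.
  transitivity ((srv_tangential c y ^ 2 + srv_normal c kappa y ^ 2) * (Tx c y ^ 2 + Ty c y ^ 2));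
    [ring | rewrite (unit_tangent_norm c y Hy); ring].
Qed.

Lemma srv_curvature (kappa_t : R -> R) t :
  signed_curvature (srv c) kappa_t -> 0 < speed c t ->
  ~ (kappa t = 0 /\ Derive (speed c) t = 0) ->
  kappa_t t * speed (srv c) t = kappa t * speed c t + phi_dot c kappa t.
Proof.
  intros Hkt Ht Hnz.
  assert (Hab := proj2 (srv_coef_pos_iff c kappa t Ht) Hnz).
  assert (Hsrv : 0 < speed (srv c) t) by (rewrite speed_srv by exact Ht; apply sqrt_lt_R0, Hab).
  assert (HT := unit_tangent_norm c t Ht).
  destruct (ex_derive_tangent t Ht) as [HTx HTy].
  destruct (ex_derive_phi t Ht) as [Hden Hnum].
  assert (Hm : ex_derive (fun s => 2 * sqrt (speed c s)) t).
  { auto_derive. repeat split; auto using ex_derive_speed. }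
  assert (Hm0 : 2 * sqrt (speed c t) <> 0) by (pose proof (sqrt_lt_R0 _ Ht); lra).
  assert (HA : ex_derive (srv_tangential c) t) by (apply ex_derive_div; assumption).
  assert (HB : ex_derive (srv_normal c kappa) t) by (apply ex_derive_div; assumption).
  assert (Hvel := locally_regular _ t Ht srv_velocity).
  assert (Hacc : ex_derive (Derive (cx (srv c))) t /\ ex_derive (Derive (cy (srv c))) t).
  { split; (eapply ex_derive_ext_loc;
      [ apply (filter_imp _ _ (fun s Hs => eq_sym (proj1 Hs)) Hvel)
        || apply (filter_imp _ _ (fun s Hs => eq_sym (proj2 Hs)) Hvel)
      | auto_derive; tauto ]). }
  rewrite Rmult_comm, <- (curvature_angular_velocity (srv c) kappa_t t Hkt Hsrv),
    tangent_angular_velocity by tauto.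
  rewrite (angular_velocity_ext_loc _ _
    (fun s => srv_tangential c s * Tx c s - srv_normal c kappa s * Ty c s)
    (fun s => srv_tangential c s * Ty c s + srv_normal c kappa s * Tx c s) t Hvel).
  rewrite angular_velocity_mul by (assumption || lra).
  assert (Hphi : ~ (phi_den c t = 0 /\ phi_num c kappa t = 0)).
  { intros [H1 H2]. unfold srv_tangential, srv_normal in Hab.
    rewrite H1, H2, Rdiv_0_l in Hab. lra. }
  rewrite (curvature_angular_velocity c kappa t Hk Ht), phi_dot_angular_velocity by assumption.
  replace (angular_velocity (srv_tangential c) (srv_normal c kappa) t)
    with (angular_velocity (phi_den c) (phi_num c kappa) t); [ring|].
  symmetry. apply angular_velocity_div; try assumption. apply sum_sq_pos, Hphi.
Qed.

End Curvature.
End SmoothCurve.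

Theorem proposition1 (D : param_domain) (c : R -> R * R) (kappa : R -> R) :
  curve_on D c ->
  immersion D c ->
  signed_curvature c kappa ->
  (forall t, in_dom D t ->
     speed (srv c) t =
     sqrt (Derive (speed c) t ^ 2 / (4 * speed c t) + speed c t ^ 3 * kappa t ^ 2)) /\
  (immersion D (srv c) <->
     (forall t, in_dom D t -> ~ (kappa t = 0 /\ Derive (speed c) t = 0))) /\
  ((forall t, in_dom D t -> ~ (kappa t = 0 /\ Derive (speed c) t = 0)) ->
     forall kappa_t : R -> R, signed_curvature (srv c) kappa_t ->
     forall t, in_dom D t ->
       kappa_t t * speed (srv c) t = kappa t * speed c t + phi_dot c kappa t).
Proof.
  intros [Hc _] Hreg Hk.
  assert (Hspeed : forall t, in_dom D t ->
    speed (srv c) t = sqrt (srv_tangential c t ^ 2 + srv_normal c kappa t ^ 2)).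
  { intros t Ht. exact (speed_srv c Hc kappa Hk t (Hreg t Ht)). }
  split; [|split].
  - intros t Ht. rewrite Hspeed, srv_coef_norm by auto. reflexivity.
  - split; intros H t Ht; specialize (H t Ht).
    + rewrite Hspeed, sqrt_pos_iff, srv_coef_pos_iff in H by auto. exact H.
    + rewrite Hspeed, sqrt_pos_iff, srv_coef_pos_iff by auto. exact H.
  - intros Hnz kappa_t Hkt t Ht.
    exact (srv_curvature c Hc kappa Hk kappa_t t Hkt (Hreg t Ht) (Hnz t Ht)).
Qed.
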